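(* Let $\mathcal M=(\mathbf M^{(\lambda)})_{\lambda>0}$, $\mathbf M^{(\lambda)}=(M^{(\lambda)}_p)_{p\in\mathbb N_0}$, be a weight matrix in dimension $d=1$ such that for every $\lambda>0$: $(M^{(\lambda)}_p)^2\le M^{(\lambda)}_{p-1}M^{(\lambda)}_{p+1}$ for all $p\in\mathbb N$ and $\lim_{p\to\infty}(M^{(\lambda)}_p)^{1/p}=+\infty$. Assume moreover that $\mu^{(\lambda)}_p:=M^{(\lambda)}_p/M^{(\lambda)}_{p-1}$ ($p\in\mathbb N$), $\mu^{(\lambda)}_0:=1$, satisfy $\mu^{(\lambda)}_p\le\mu^{(\kappa)}_p$ for all $p$ whenever $0<\lambda\le\kappa$. Then the following are equivalent: (a) for every $j\in\mathbb N$ there exists $\ell\in\mathbb N$, $\ell>j$, such that $\sum_{k=1}^{\infty}e^{\omega_{\mathbf M^{(1/j)}}(jk^{1/2})-\omega_{\mathbf M^{(1/\ell)}}(\ell k^{1/2})}<+\infty$; (b) for every $\lambda>0$ there exist $0<\kappa<\lambda$ and $A\ge1$ such that $M^{(\kappa)}_{p+1}\le A^{p+1}M^{(\lambda)}_p$ for all $p\in\mathbb N$.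
   Context: A weight matrix (here $d=1$) is a family $(\mathbf M^{(\lambda)})_{\lambda>0}$ of sequences of positive reals $(M^{(\lambda)}_p)_{p\in\mathbb N_0}$ with $M^{(\lambda)}_0=1$ and $M^{(\lambda)}_p\le M^{(\kappa)}_p$ for all $p$ whenever $0<\lambda\le\kappa$. The associated function of $\mathbf M=(M_p)$ is $\omega_{\mathbf M}(t)=\sup_{p\in\mathbb N_0}\log\frac{|t|^p}{M_p}$ (with $0^0=1$). *)

From Stdlib Require Import Reals.
From Coquelicot Require Import Coquelicot.
Open Scope R_scope.

Definition weight_matrix (M : R -> nat -> R) : Prop :=
  (forall lam, 0 < lam -> M lam 0%nat = 1) /\
  (forall lam p, 0 < lam -> 0 < M lam p) /\
  (forall lam kap p, 0 < lam -> lam <= kap -> M lam p <= M kap p).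

(* Associated function omega_M(t) = sup_p log(|t|^p / M_p) = log (sup_p |t|^p / M_p)
   (with 0^0 = 1, as Stdlib's pow). *)
Definition omega (M : nat -> R) (t : R) : R :=
  ln (real (Lub_Rbar (fun x => exists p : nat, x = Rabs t ^ p / M p))).

Definition mu (M : nat -> R) (p : nat) : R :=
  match p with 0%nat => 1 | S q => M p / M q end.

From Stdlib Require Import Reals Lra Lia.
From Coquelicot Require Import Coquelicot.
Open Scope R_scope.

(* Write [Omega_M t = exp (omega_M t) = sup_p |t|^p / M_p].  Condition (b) is a
   polynomial comparison of these functions in disguise.  Shifting indices, (b)
   gives [t Omega_{M^lam}(t) <= C Omega_{M^kap}(A t)]; four iterations give
   [t^4 Omega_{M^lam}(t) <= C Omega_{M^kap}(B t)], and at [t = j sqrt k] this bounds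
   the k-th term of the series in (a) by [C / k^2].  Conversely, the terms
   [k < i <= 2k] of the convergent series in (a) give
   [t^2 Omega_{M^(1/j)}(j t) <= S Omega_{M^(1/l)}(3 l t)].  For a log-convex [N] the
   supremum defining [Omega_N (mu_(p+1))] is attained at [p+1]; evaluating the
   growth bound there yields [M^(1/l)_(p+1) <= A^(p+1) M^(1/j)_p]. *)

Definition Omega (N : nat -> R) (t : R) : R :=
  real (Lub_Rbar (fun x => exists p : nat, x = Rabs t ^ p / N p)).

(* The last condition makes the supremum in [Omega N] finite; otherwise [real]
   would return the junk value [0]. *)
Definition weight_seq (N : nat -> R) : Prop :=
  N 0%nat = 1 /\ (forall p, 0 < N p) /\
  forall t, exists B, forall p, Rabs t ^ p / N p <= B.

Definition log_convex (N : nat -> R) : Prop :=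
  forall p : nat, (1 <= p)%nat -> N p ^ 2 <= N (p - 1)%nat * N (p + 1)%nat.

Section OmegaTheory.
Variable N : nat -> R.
Hypothesis N_weight : weight_seq N.

Lemma Omega_lub t :
  (forall p, Rabs t ^ p / N p <= Omega N t) /\
  (forall B, (forall p, Rabs t ^ p / N p <= B) -> Omega N t <= B).
Proof.
  destruct N_weight as [_ [_ Nbound]]. destruct (Nbound t) as [B HB].
  unfold Omega.
  set (E := fun x => exists p : nat, x = Rabs t ^ p / N p).
  destruct (Lub_Rbar_correct E) as [Hub Hleast].
  assert (Hfin : Rbar_le (Lub_Rbar E) B) by (apply Hleast; intros x [p ->]; apply HB).
  assert (Hne : Rbar_le (Rabs t ^ 0 / N 0%nat) (Lub_Rbar E)) by (apply Hub; exists 0%nat; reflexivity).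
  destruct (Lub_Rbar E) as [l | |]; try contradiction.
  split.
  - intros p. apply (Hub _ (ex_intro _ p eq_refl)).
  - intros B' HB'. apply (Hleast B'). intros x [p ->]. apply HB'.
Qed.

Lemma Omega_ub t p : Rabs t ^ p / N p <= Omega N t.
Proof. apply Omega_lub. Qed.

Lemma Omega_least t B : (forall p, Rabs t ^ p / N p <= B) -> Omega N t <= B.
Proof. apply Omega_lub. Qed.

Lemma Omega_ge1 t : 1 <= Omega N t.
Proof.
  pose proof (Omega_ub t 0) as H. destruct N_weight as [N0 _].
  rewrite N0 in H. simpl in H. lra.
Qed.

Lemma Omega_monotone t t' : 0 <= t <= t' -> Omega N t <= Omega N t'.
Proof.
  intros Ht. apply Omega_least. intros p.
  eapply Rle_trans; [| apply (Omega_ub t' p)].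
  destruct N_weight as [_ [Npos _]]. unfold Rdiv.
  apply Rmult_le_compat_r; [left; apply Rinv_0_lt_compat, Npos |].
  apply pow_incr. rewrite !Rabs_right; lra.
Qed.

Lemma mul_Omega_le c t B :
  0 < c -> (forall p, c * (Rabs t ^ p / N p) <= B) -> c * Omega N t <= B.
Proof.
  intros Hc HB. rewrite Rmult_comm. apply (Rle_div_r _ _ c Hc).
  apply Omega_least. intros p. apply (Rle_div_r _ _ c Hc). rewrite Rmult_comm. apply HB.
Qed.

Lemma Omega1_mul_ge1 p : 1 <= Omega N 1 * N p.
Proof.
  pose proof (Omega_ub 1 p) as H. rewrite Rabs_R1, pow1 in H.
  destruct N_weight as [_ [Npos _]]. apply (Rle_div_l _ _ _ (Npos p)) in H. exact H.
Qed.

End OmegaTheory.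

Lemma Omega_antitone_weight N N' t :
  weight_seq N -> weight_seq N' -> (forall p, N p <= N' p) -> Omega N' t <= Omega N t.
Proof.
  intros WN WN' HN. apply Omega_least; [exact WN' |]. intros p.
  eapply Rle_trans; [| apply (Omega_ub N WN t p)].
  destruct WN as [_ [Npos _]]. unfold Rdiv.
  apply Rmult_le_compat_l; [apply pow_le, Rabs_pos |].
  apply Rinv_le_contravar; [apply Npos | apply HN].
Qed.

Lemma exp_omega_sub N N' t t' : weight_seq N -> weight_seq N' ->
  exp (omega N t - omega N' t') = Omega N t / Omega N' t'.
Proof.
  intros WN WN'. pose proof (Omega_ge1 N WN t). pose proof (Omega_ge1 N' WN' t').
  unfold omega. fold (Omega N t) (Omega N' t').
  rewrite <- ln_div by lra. apply exp_ln. apply Rdiv_lt_0_compat; lra.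
Qed.

Lemma bounded_of_eventually_bounded (u : nat -> R) K c :
  (forall p, (K <= p)%nat -> u p <= c) -> exists B, forall p, u p <= B.
Proof.
  revert c. induction K as [| K IH]; intros c Hc.
  - exists c. intros p. apply Hc. lia.
  - apply (IH (Rmax c (u K))). intros p Hp.
    destruct (Nat.eq_dec p K) as [-> | Hne]; [apply Rmax_r |].
    eapply Rle_trans; [apply Hc; lia | apply Rmax_l].
Qed.

Lemma weight_seq_of_root_lim N : N 0%nat = 1 -> (forall p, 0 < N p) ->
  is_lim_seq (fun p : nat => Rpower (N p) (/ INR p)) p_infty -> weight_seq N.
Proof.
  intros N0 Npos Hlim. split; [exact N0 | split; [exact Npos |]].
  intros t. apply is_lim_seq_spec in Hlim. destruct (Hlim (Rabs t)) as [K HK].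
  apply (bounded_of_eventually_bounded _ (S K) 1). intros p Hp.
  set (r := Rpower (N p) (/ INR p)).
  assert (Hr : Rabs t < r) by (apply HK; lia).
  assert (Nr : N p = r ^ p).
  { unfold r. rewrite <- Rpower_pow by apply exp_pos.
    rewrite Rpower_mult, Rinv_l by (apply not_0_INR; lia). symmetry. apply Rpower_1, Npos. }
  rewrite Nr. apply (Rle_div_l _ _ _ (pow_lt _ _ (Rle_lt_trans _ _ _ (Rabs_pos t) Hr))).
  rewrite Rmult_1_l. apply pow_incr. split; [apply Rabs_pos | lra].
Qed.

Lemma unimodal_le_peak (u : nat -> R) m :
  (forall q, (q < m)%nat -> u q <= u (S q)) ->
  (forall q, (m <= q)%nat -> u (S q) <= u q) ->
  forall q, u q <= u m.
Proof.
  intros Hup Hdown q. destruct (Compare_dec.le_lt_dec q m) as [Hq | Hq].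
  - assert (Hleft : forall d q, (q + d = m)%nat -> u q <= u m).
    { induction d as [| d IH]; intros q' Hq'.
      - replace q' with m by lia. lra.
      - eapply Rle_trans; [apply Hup; lia | apply IH; lia]. }
    apply (Hleft (m - q)%nat). lia.
  - replace q with (m + (q - m))%nat by lia.
    induction (q - m)%nat as [| d IH].
    + rewrite Nat.add_0_r. lra.
    + eapply Rle_trans; [| exact IH].
      rewrite Nat.add_succ_r. apply Hdown. lia.
Qed.

Section LogConvex.
Variable N : nat -> R.
Hypothesis N_pos : forall p, 0 < N p.
Hypothesis N_lc : log_convex N.

Lemma mu_le_succ q : mu N (S q) <= mu N (S (S q)).
Proof.
  pose proof (N_lc (S q) ltac:(lia)) as H.
  replace (S q - 1)%nat with q in H by lia. replace (S q + 1)%nat with (S (S q)) in H by lia.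
  pose proof (N_pos q). pose proof (N_pos (S q)). simpl mu.
  apply (Rmult_le_reg_r (N q * N (S q))); [apply Rmult_lt_0_compat; assumption |].
  replace (N (S q) / N q * (N q * N (S q))) with (N (S q) ^ 2) by (field; lra).
  replace (N (S (S q)) / N (S q) * (N q * N (S q))) with (N q * N (S (S q))) by (field; lra).
  exact H.
Qed.

Lemma mu_incr q r : (q <= r)%nat -> mu N (S q) <= mu N (S r).
Proof.
  induction 1 as [| r _ IH]; [lra |].
  eapply Rle_trans; [exact IH | apply mu_le_succ].
Qed.

Lemma Omega_at_mu (N_weight : weight_seq N) p :
  Omega N (mu N (S p)) = mu N (S p) ^ S p / N (S p).
Proof.
  set (s := mu N (S p)).
  assert (Hs : 0 < s) by (apply Rdiv_lt_0_compat; apply N_pos).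
  set (u q := s ^ q / N q).
  assert (Hstep : forall q, u (S q) = u q * (s / mu N (S q))).
  { intros q. unfold u. simpl mu. pose proof (N_pos q). pose proof (N_pos (S q)).
    simpl. field. lra. }
  assert (Hu : forall q, 0 <= u q) by (intros q; left; apply Rdiv_lt_0_compat; [apply pow_lt, Hs | apply N_pos]).
  assert (Hmu : forall q, 0 < mu N (S q)) by (intros q; apply Rdiv_lt_0_compat; apply N_pos).
  apply Rle_antisym.
  - apply Omega_least; [exact N_weight |]. intros q. rewrite Rabs_right by lra.
    apply (unimodal_le_peak u (S p)); intros q' Hq'; rewrite Hstep.
    + rewrite <- (Rmult_1_r (u q')) at 1. apply Rmult_le_compat_l; [apply Hu |].
      apply (Rle_div_r _ _ _ (Hmu q')). rewrite Rmult_1_l. apply mu_incr. lia.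
    + rewrite <- (Rmult_1_r (u q')) at 2. apply Rmult_le_compat_l; [apply Hu |].
      apply (Rle_div_l _ _ _ (Hmu q')). rewrite Rmult_1_l. apply mu_incr. lia.
  - pose proof (Omega_ub N N_weight s (S p)) as H. rewrite Rabs_right in H by lra. exact H.
Qed.

Lemma weight_le_pow_mu (N_weight : weight_seq N) p : N (S p) <= mu N (S p) ^ S p.
Proof.
  pose proof (Omega_ge1 N N_weight (mu N (S p))) as H. rewrite Omega_at_mu in H by exact N_weight.
  apply (Rle_div_r _ _ _ (N_pos (S p))) in H. lra.
Qed.

End LogConvex.

Lemma Omega_shift N N' A : weight_seq N -> weight_seq N' -> 0 < A ->
  (forall p, (1 <= p)%nat -> N (p + 1)%nat <= A ^ (p + 1) * N' p) ->
  exists C, 0 < C /\ forall t, 0 <= t -> t * Omega N' t <= C * Omega N (A * t).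
Proof.
  intros WN WN' HA Hshift. pose proof WN as [_ [Npos _]]. pose proof WN' as [N'0 [N'pos _]].
  set (C := Rmax 1 (N 1%nat / A)).
  assert (HC : 1 <= C) by apply Rmax_l.
  exists C. split; [lra |]. intros t [Ht | <-].
  2:{ rewrite Rmult_0_l. apply Rmult_le_pos; [lra |]. pose proof (Omega_ge1 N WN (A * 0)). lra. }
  assert (HAt : 0 < A * t) by (apply Rmult_lt_0_compat; assumption).
  apply mul_Omega_le; [exact WN' | exact Ht |]. intros [| q]; rewrite Rabs_right by lra.
  - pose proof (Omega_ub N WN (A * t) 1) as H1. rewrite Rabs_right, pow_1 in H1 by lra.
    pose proof (Npos 1%nat). rewrite N'0.
    replace (t * (t ^ 0 / 1)) with (A * t / N 1%nat * (N 1%nat / A)) by (simpl; field; lra).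
    rewrite Rmult_comm. apply Rmult_le_compat; [| | apply Rmax_r | exact H1].
    + left. apply Rdiv_lt_0_compat; assumption.
    + left. apply Rdiv_lt_0_compat; assumption.
  - pose proof (Omega_ub N WN (A * t) (S q + 1)) as Hub. rewrite Rabs_right in Hub by lra.
    pose proof (Omega_ge1 N WN (A * t)).
    apply Rle_trans with (Omega N (A * t)); [| rewrite <- (Rmult_1_l (Omega N (A * t))) at 1;
      apply Rmult_le_compat_r; lra].
    eapply Rle_trans; [| exact Hub].
    pose proof (N'pos (S q)). pose proof (Npos (S q + 1)%nat).
    replace (t * (t ^ S q / N' (S q))) with (t ^ (S q + 1) * / N' (S q)) by (rewrite pow_add; field; lra).
    rewrite Rpow_mult_distr.
    replace (A ^ (S q + 1) * t ^ (S q + 1) / N (S q + 1)%nat)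
      with (t ^ (S q + 1) * (A ^ (S q + 1) / N (S q + 1)%nat)) by (unfold Rdiv; ring).
    apply Rmult_le_compat_l; [apply pow_le; lra |].
    apply (Rle_div_r _ _ _ (Npos (S q + 1)%nat)). rewrite Rmult_comm.
    apply (Rle_div_l _ _ _ (N'pos (S q))). apply Hshift. lia.
Qed.

Lemma ex_series_inv_sq : ex_series (fun n : nat => / INR (S n) ^ 2).
Proof.
  set (a n := / INR (S n) ^ 2).
  assert (Hpos : forall n, 0 < a n) by (intros n; apply Rinv_0_lt_compat, pow_lt, lt_0_INR; lia).
  assert (Htele : forall n, sum_n a n <= 2 - / INR (S n)).
  { induction n as [| n IH].
    - rewrite sum_O. unfold a. simpl. lra.
    - rewrite sum_Sn. change (plus ?x ?y) with (x + y).
      assert (Hn : 1 <= INR (S n)) by (apply (le_INR 1); lia).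
      assert (a (S n) <= / INR (S n) - / INR (S (S n))).
      { unfold a. rewrite (S_INR (S n)). set (x := INR (S n)) in *.
        replace (/ x - / (x + 1)) with (/ (x * (x + 1))) by (field; lra).
        apply Rinv_le_contravar; [apply Rmult_lt_0_compat |]; nra. }
      lra. }
  destruct (ex_finite_lim_seq_incr (sum_n a) 2) as [l Hl].
  - intros n. rewrite sum_Sn. change (plus ?x ?y) with (x + y). pose proof (Hpos (S n)). lra.
  - intros n. pose proof (Htele n). assert (0 < / INR (S n)) by (apply Rinv_0_lt_compat, lt_0_INR; lia). lra.
  - exists l. exact Hl.
Qed.

Lemma ex_series_Omega_ratio N1 N2 a b C : weight_seq N1 -> weight_seq N2 ->
  (forall t, 1 <= t -> t ^ 4 * Omega N1 (a * t) <= C * Omega N2 (b * t)) ->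
  ex_series (fun n => Omega N1 (a * sqrt (INR (S n))) / Omega N2 (b * sqrt (INR (S n)))).
Proof.
  intros W1 W2 Hgrowth.
  apply (@ex_series_le R_AbsRing R_CompleteNormedModule _ (fun n => C * / INR (S n) ^ 2)).
  2:{ apply (ex_series_ext (fun n => scal C (/ INR (S n) ^ 2))); [reflexivity |].
      apply (@ex_series_scal_l R_AbsRing R_NormedModule), ex_series_inv_sq. }
  intros n. change norm with Rabs.
  set (k := INR (S n)). set (t := sqrt k).
  assert (Hk : 1 <= k) by (apply (le_INR 1); lia).
  assert (Ht : 1 <= t) by (rewrite <- sqrt_1; apply sqrt_le_1_alt; exact Hk).
  assert (Ht4 : t ^ 4 = k ^ 2) by (unfold t; rewrite <- (pow2_sqrt k) at 2 by lra; ring).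
  pose proof (Omega_ge1 N1 W1 (a * t)). pose proof (Omega_ge1 N2 W2 (b * t)).
  pose proof (Hgrowth t Ht) as Hbound. rewrite Ht4 in Hbound.
  assert (Hk2 : 0 < k ^ 2) by (apply pow_lt; lra).
  rewrite Rabs_right by (apply Rle_ge; left; apply Rdiv_lt_0_compat; lra).
  apply (Rle_div_l _ _ _ (ltac:(lra) : Omega N2 (b * t) > 0)).
  replace (C * / k ^ 2 * Omega N2 (b * t)) with (C * Omega N2 (b * t) / k ^ 2) by (field; lra).
  apply (Rle_div_r _ _ _ Hk2). lra.
Qed.

Lemma sum_block_le_Series (a : nat -> R) K b : (forall n, 0 <= a n) -> ex_series a ->
  (forall i, (K < i <= 2 * K)%nat -> b <= a i) -> INR K * b <= Series a.
Proof.
  intros Hpos Hex Hb.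
  assert (Hpartial : forall n, sum_n a n <= Series a).
  { apply is_lim_seq_incr_compare; [apply Series_correct, Hex |].
    intros n. rewrite sum_Sn. change (plus ?x ?y) with (x + y). pose proof (Hpos (S n)). lra. }
  assert (Hhead : 0 <= sum_n a K).
  { apply Rle_trans with (sum_n_m (fun _ => 0) 0 K); [| apply sum_n_m_le, Hpos].
    rewrite sum_n_m_const. lra. }
  assert (Hblock : INR K * b <= sum_n_m a (S K) (2 * K)).
  { replace (INR K * b) with (sum_n_m (fun _ => b) (S K) (2 * K))
      by (rewrite sum_n_m_const; f_equal; f_equal; lia).
    rewrite (sum_n_m_ext_loc (fun _ => b) (fun i => Rmin b (a i))).
    - apply sum_n_m_le. intros i. apply Rmin_r.
    - intros i Hi. symmetry. apply Rmin_left, Hb. lia. }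
  assert (Hsplit : sum_n_m a (S K) (2 * K) = sum_n a (2 * K) - sum_n a K)
    by exact (sum_n_m_sum_n a K (2 * K) ltac:(lia)).
  pose proof (Hpartial (2 * K)%nat). lra.
Qed.

Lemma Omega_ratio_block_le_Series N1 N2 a b K :
  weight_seq N1 -> weight_seq N2 -> 0 <= a -> 0 <= b -> (1 <= K)%nat ->
  let r n := Omega N1 (a * sqrt (INR (S n))) / Omega N2 (b * sqrt (INR (S n))) in
  ex_series r ->
  INR K * (Omega N1 (a * sqrt (INR K)) / Omega N2 (b * sqrt (3 * INR K))) <= Series r.
Proof.
  intros W1 W2 Ha Hb HK r Hex.
  assert (Hsqrt_monotone : forall c x y, 0 <= c -> 0 <= x <= y -> 0 <= c * sqrt x <= c * sqrt y).
  { intros c x y Hc Hxy. split; [apply Rmult_le_pos; [exact Hc | apply sqrt_pos] |].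
    apply Rmult_le_compat_l; [exact Hc | apply sqrt_le_1_alt; lra]. }
  apply sum_block_le_Series; [| exact Hex |].
  - intros n. pose proof (Omega_ge1 N1 W1 (a * sqrt (INR (S n)))).
    pose proof (Omega_ge1 N2 W2 (b * sqrt (INR (S n)))).
    left. apply Rdiv_lt_0_compat; lra.
  - (* The indices [K < i <= 2K] satisfy [K <= i + 1 <= 3K]. *)
    intros i Hi. unfold r.
    assert (HKi : INR K <= INR (S i)) by (apply le_INR; lia).
    assert (HiK : INR (S i) <= 3 * INR K).
    { replace 3 with (INR 3) by (simpl; lra). rewrite <- mult_INR. apply le_INR. lia. }
    pose proof (pos_INR K).
    pose proof (Omega_ge1 N1 W1 (a * sqrt (INR K))).
    pose proof (Omega_ge1 N2 W2 (b * sqrt (INR (S i)))).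
    pose proof (Omega_ge1 N2 W2 (b * sqrt (3 * INR K))).
    unfold Rdiv. apply Rmult_le_compat; [lra | left; apply Rinv_0_lt_compat; lra | |].
    + apply Omega_monotone; [exact W1 | apply Hsqrt_monotone; lra].
    + apply Rinv_le_contravar; [lra |].
      apply Omega_monotone; [exact W2 | apply Hsqrt_monotone; lra].
Qed.

Lemma Omega_growth_of_ex_series N1 N2 a b :
  weight_seq N1 -> weight_seq N2 -> 0 <= a -> 0 <= b ->
  ex_series (fun n => Omega N1 (a * sqrt (INR (S n))) / Omega N2 (b * sqrt (INR (S n)))) ->
  exists S, forall t, 1 <= t -> t ^ 2 * Omega N1 (a * t) <= S * Omega N2 (3 * b * t).
Proof.
  intros W1 W2 Ha Hb Hex.
  set (total := Series (fun n => Omega N1 (a * sqrt (INR (S n))) / Omega N2 (b * sqrt (INR (S n))))).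
  exists total. intros t Ht.
  assert (Ht2 : 1 <= t ^ 2) by (apply pow_R1_Rle; exact Ht).
  destruct (nfloor_ex (t ^ 2) ltac:(lra)) as [m [Hm1 Hm2]].
  pose proof (Omega_ratio_block_le_Series N1 N2 a b (S m) W1 W2 Ha Hb ltac:(lia) Hex) as HK.
  fold total in HK. rewrite S_INR in HK. set (K := INR m + 1) in *.
  assert (HtK : t <= sqrt K).
  { rewrite <- (sqrt_pow2 t) by lra. apply sqrt_le_1_alt. lra. }
  assert (HK3 : sqrt (3 * K) <= 3 * t).
  { rewrite <- (sqrt_pow2 (3 * t)) by lra. apply sqrt_le_1_alt. unfold K. nra. }
  set (X := Omega N1 (a * sqrt K)) in *. set (Y := Omega N2 (b * sqrt (3 * K))) in *.
  assert (HX1 : 1 <= X) by apply (Omega_ge1 N1 W1).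
  assert (HY : 1 <= Y) by apply (Omega_ge1 N2 W2).
  assert (HX : Omega N1 (a * t) <= X).
  { apply Omega_monotone; [exact W1 | split; [nra | apply Rmult_le_compat_l; lra]]. }
  assert (HY' : Y <= Omega N2 (3 * b * t)).
  { apply Omega_monotone; [exact W2 | split; [apply Rmult_le_pos; [lra | apply sqrt_pos] |]].
    replace (3 * b * t) with (b * (3 * t)) by ring. apply Rmult_le_compat_l; lra. }
  assert (Htotal : 0 <= total).
  { eapply Rle_trans; [| exact HK]. apply Rmult_le_pos; [unfold K; pose proof (pos_INR m); lra |].
    left. apply Rdiv_lt_0_compat; lra. }
  pose proof (Omega_ge1 N1 W1 (a * t)).
  apply Rle_trans with (K * X); [apply Rmult_le_compat; lra |].
  replace (K * X) with (K * (X / Y) * Y) by (field; lra).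
  apply Rle_trans with (total * Y); [apply Rmult_le_compat_r; lra |]. apply Rmult_le_compat_l; lra.
Qed.

Lemma weight_shift_at_mu N' N c L p :
  weight_seq N' -> weight_seq N -> log_convex N -> 0 < L ->
  (forall t, 1 <= t -> t * Omega N' t <= c * Omega N (L * t)) ->
  L <= mu N (S p) -> N (S p) <= c * L ^ S p * N' p.
Proof.
  intros W' W Nlc HL Hgrowth HLs.
  pose proof W as [_ [Npos _]]. pose proof W' as [_ [N'pos _]].
  pose proof (Omega_at_mu N Npos Nlc W p) as Hpeak.
  set (s := mu N (S p)) in *. set (t := s / L).
  assert (Ht : 1 <= t) by (apply (Rle_div_r _ _ _ HL); lra).
  assert (Hst : s = L * t) by (unfold t; field; lra).
  pose proof (Npos (S p)). pose proof (N'pos p).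
  pose proof (Hgrowth t Ht) as Hg. rewrite <- Hst, Hpeak in Hg.
  pose proof (Omega_ub N' W' t p) as Hub. rewrite Rabs_right in Hub by lra.
  assert (Hc : t ^ S p / N' p <= c * (s ^ S p / N (S p))).
  { eapply Rle_trans; [| exact Hg].
    simpl. replace (t * t ^ p / N' p) with (t * (t ^ p / N' p)) by (unfold Rdiv; ring).
    apply Rmult_le_compat_l; lra. }
  assert (Hpos : 0 < t ^ S p) by (apply pow_lt; lra).
  apply (Rmult_le_reg_r (t ^ S p / (N (S p) * N' p))).
  { apply Rdiv_lt_0_compat; [exact Hpos | apply Rmult_lt_0_compat; assumption]. }
  replace (N (S p) * (t ^ S p / (N (S p) * N' p))) with (t ^ S p / N' p) by (field; lra).
  replace (c * L ^ S p * N' p * (t ^ S p / (N (S p) * N' p)))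
    with (c * ((L * t) ^ S p / N (S p))) by (rewrite Rpow_mult_distr; field; lra).
  rewrite <- Hst. exact Hc.
Qed.

Lemma weight_shift_of_Omega_growth N' N c L :
  weight_seq N' -> weight_seq N -> log_convex N -> 1 <= L ->
  (forall t, 1 <= t -> t * Omega N' t <= c * Omega N (L * t)) ->
  exists A, 1 <= A /\ forall p, N (S p) <= A ^ S p * N' p.
Proof.
  intros W' W Nlc HL Hgrowth.
  pose proof W as [_ [Npos _]]. pose proof W' as [_ [N'pos _]].
  set (W1 := Omega N' 1).
  assert (HW1 : 1 <= W1) by apply (Omega_ge1 N' W').
  set (c1 := Rmax 1 c).
  assert (Hc1 : 1 <= c1) by apply Rmax_l.
  exists (c1 * W1 * L). split; [assert (1 <= c1 * W1) by nra; nra |]. intros p.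
  pose proof (Omega1_mul_ge1 N' W' p) as HN'low. fold W1 in HN'low.
  pose proof (N'pos p).
  assert (HLp : 1 <= L ^ S p) by (apply pow_R1_Rle; exact HL).
  assert (Hbound : N (S p) <= c1 * L ^ S p * (W1 * N' p)).
  { destruct (Rle_lt_dec L (mu N (S p))) as [HLs | HsL].
    - eapply Rle_trans; [apply (weight_shift_at_mu N' N c L p); auto; lra |].
      apply Rle_trans with (c1 * L ^ S p * N' p).
      + apply Rmult_le_compat_r; [lra |]. apply Rmult_le_compat_r; [lra | apply Rmax_r].
      + apply Rmult_le_compat_l; [nra |].
        rewrite <- (Rmult_1_l (N' p)) at 1. apply Rmult_le_compat_r; lra.
    - pose proof (weight_le_pow_mu N Npos Nlc W p). pose proof (Npos (S p)).
      assert (mu N (S p) ^ S p <= L ^ S p).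
      { apply pow_incr. split; [left; apply Rdiv_lt_0_compat; apply Npos | lra]. }
      assert (1 <= c1 * (W1 * N' p)) by nra.
      replace (c1 * L ^ S p * (W1 * N' p)) with (L ^ S p * (c1 * (W1 * N' p))) by ring.
      rewrite <- (Rmult_1_r (N (S p))). apply Rmult_le_compat; lra. }
  assert (Hpow_ge : forall x, 1 <= x -> x <= x ^ S p).
  { intros x Hx. rewrite <- (pow_1 x) at 1. apply Rle_pow; [exact Hx | lia]. }
  eapply Rle_trans; [exact Hbound |].
  rewrite !Rpow_mult_distr.
  replace (c1 ^ S p * W1 ^ S p * L ^ S p * N' p) with (c1 ^ S p * L ^ S p * (W1 ^ S p * N' p)) by ring.
  apply Rmult_le_compat; [nra | nra | |].
  - apply Rmult_le_compat_r; [lra | apply Hpow_ge, Hc1].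
  - apply Rmult_le_compat_r; [lra | apply Hpow_ge, HW1].
Qed.

Definition beurling_derivation_closed (M : R -> nat -> R) : Prop :=
  forall lam, 0 < lam ->
    exists kap A, 0 < kap /\ kap < lam /\ 1 <= A /\
      forall p : nat, (1 <= p)%nat -> M kap (p + 1)%nat <= A ^ (p + 1) * M lam p.

Definition omega_sqrt_summable (M : R -> nat -> R) : Prop :=
  forall j : nat, (1 <= j)%nat ->
    exists l : nat, (j < l)%nat /\
      ex_series (fun n : nat =>
        exp (omega (M (/ INR j)) (INR j * sqrt (INR (S n)))
             - omega (M (/ INR l)) (INR l * sqrt (INR (S n))))).

Section WeightMatrix.
Variable M : R -> nat -> R.
Hypothesis M_weight : forall lam, 0 < lam -> weight_seq (M lam).
Hypothesis M_incr : forall lam kap p, 0 < lam -> lam <= kap -> M lam p <= M kap p.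

Lemma Omega_shift_iter (Mdc : beurling_derivation_closed M) m lam : 0 < lam ->
  exists kap B C, 0 < kap /\ 0 < B /\ 0 < C /\
    forall t, 0 <= t -> t ^ m * Omega (M lam) t <= C * Omega (M kap) (B * t).
Proof.
  intros Hlam. induction m as [| m IH].
  - exists lam, 1, 1. repeat split; try lra. intros t _. simpl. rewrite !Rmult_1_l. lra.
  - destruct IH as [kap [B [C [Hkap [HB [HC Hm]]]]]].
    destruct (Mdc kap Hkap) as [kap' [A [Hkap' [_ [HA Hdc]]]]].
    destruct (Omega_shift (M kap') (M kap) A (M_weight kap' Hkap') (M_weight kap Hkap)
                ltac:(lra) Hdc) as [C' [HC' Hshift]].
    exists kap', (A * B), (C / B * C'). repeat split; try assumption.
    + apply Rmult_lt_0_compat; lra.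
    + apply Rmult_lt_0_compat; [apply Rdiv_lt_0_compat |]; assumption.
    + intros t Ht. simpl. rewrite Rmult_assoc.
      eapply Rle_trans; [apply Rmult_le_compat_l; [exact Ht | apply Hm, Ht] |].
      replace (t * (C * Omega (M kap) (B * t))) with (C / B * (B * t * Omega (M kap) (B * t)))
        by (field; lra).
      rewrite (Rmult_assoc (C / B) C'), (Rmult_assoc A B t).
      apply Rmult_le_compat_l; [left; apply Rdiv_lt_0_compat; assumption |].
      apply Hshift. apply Rmult_le_pos; lra.
Qed.

Lemma omega_sqrt_summable_of_derivation_closed :
  beurling_derivation_closed M -> omega_sqrt_summable M.
Proof.
  intros Mdc j Hj.
  assert (Hjr : 1 <= INR j) by (apply (le_INR 1); exact Hj).
  assert (Hlam : 0 < / INR j) by (apply Rinv_0_lt_compat; lra).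
  destruct (Omega_shift_iter Mdc 4 (/ INR j) Hlam) as [kap [B [C [Hkap [HB [HC Hiter]]]]]].
  destruct (INR_unbounded (Rmax (INR j) (Rmax (B * INR j) (/ kap)))) as [l Hl].
  pose proof (Rmax_l (INR j) (Rmax (B * INR j) (/ kap))).
  pose proof (Rmax_r (INR j) (Rmax (B * INR j) (/ kap))).
  pose proof (Rmax_l (B * INR j) (/ kap)). pose proof (Rmax_r (B * INR j) (/ kap)).
  assert (Hlr : 0 < INR l) by lra.
  assert (Hlk : / INR l <= kap).
  { rewrite <- (Rinv_inv kap). apply Rinv_le_contravar; [apply Rinv_0_lt_compat |]; lra. }
  exists l. split; [apply INR_lt; lra |].
  apply (ex_series_ext (fun n => Omega (M (/ INR j)) (INR j * sqrt (INR (S n)))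
                                 / Omega (M (/ INR l)) (INR l * sqrt (INR (S n))))).
  { intros n. symmetry. apply exp_omega_sub; apply M_weight; [exact Hlam | apply Rinv_0_lt_compat, Hlr]. }
  apply (ex_series_Omega_ratio _ _ _ _ C); try apply M_weight; try assumption.
  { apply Rinv_0_lt_compat, Hlr. }
  intros t Ht.
  assert (Hjt : 0 <= INR j * t) by nra.
  apply Rle_trans with ((INR j * t) ^ 4 * Omega (M (/ INR j)) (INR j * t)).
  { pose proof (Omega_ge1 _ (M_weight _ Hlam) (INR j * t)).
    apply Rmult_le_compat_r; [lra |]. apply pow_incr. nra. }
  eapply Rle_trans; [apply Hiter, Hjt |]. apply Rmult_le_compat_l; [lra |].
  apply Rle_trans with (Omega (M kap) (INR l * t)).
  - apply (Omega_monotone _ (M_weight kap Hkap)). split; [nra |].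
    rewrite <- Rmult_assoc. apply Rmult_le_compat_r; lra.
  - apply Omega_antitone_weight; try apply M_weight; try lra.
    + apply Rinv_0_lt_compat, Hlr.
    + intros p. apply M_incr; [apply Rinv_0_lt_compat, Hlr | exact Hlk].
Qed.

Lemma derivation_closed_of_omega_sqrt_summable :
  (forall lam, 0 < lam -> log_convex (M lam)) ->
  omega_sqrt_summable M -> beurling_derivation_closed M.
Proof.
  intros M_lc Hsum lam Hlam.
  destruct (INR_unbounded (/ lam)) as [j Hj].
  assert (Hilam : 0 < / lam) by (apply Rinv_0_lt_compat, Hlam).
  assert (Hj1 : (1 <= j)%nat) by (destruct j; [simpl in Hj; lra | lia]).
  assert (Hjr : 1 <= INR j) by (apply (le_INR 1); exact Hj1).
  assert (Hjlam : / INR j < lam).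
  { rewrite <- (Rinv_inv lam). apply Rinv_lt_contravar; [apply Rmult_lt_0_compat |]; lra. }
  destruct (Hsum j Hj1) as [l [Hjl Hex]].
  assert (Hlr : INR j < INR l) by (apply lt_INR, Hjl).
  assert (Hinvj : 0 < / INR j) by (apply Rinv_0_lt_compat; lra).
  assert (Hinvl : 0 < / INR l) by (apply Rinv_0_lt_compat; lra).
  assert (Hlj : / INR l < / INR j) by (apply Rinv_lt_contravar; [apply Rmult_lt_0_compat |]; lra).
  pose proof (M_weight _ Hinvj) as Wj. pose proof (M_weight _ Hinvl) as Wl.
  assert (Hratio : ex_series (fun n => Omega (M (/ INR j)) (INR j * sqrt (INR (S n)))
                                       / Omega (M (/ INR l)) (INR l * sqrt (INR (S n))))).
  { eapply ex_series_ext; [| exact Hex]. intros n. apply exp_omega_sub; assumption. }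
  destruct (Omega_growth_of_ex_series _ _ (INR j) (INR l) Wj Wl ltac:(lra) ltac:(lra) Hratio) as [c Hc].
  destruct (weight_shift_of_Omega_growth (M (/ INR j)) (M (/ INR l)) c (3 * INR l) Wj Wl
              (M_lc _ Hinvl) ltac:(lra)) as [A [HA Hshift]].
  { intros t Ht. eapply Rle_trans; [| apply (Hc t Ht)].
    pose proof (Omega_ge1 _ Wj t).
    apply Rmult_le_compat; [lra | lra | rewrite <- (pow_1 t) at 1; apply Rle_pow; [lra | lia] |].
    apply Omega_monotone; [exact Wj | nra]. }
  exists (/ INR l), A. repeat split; [exact Hinvl | lra | exact HA |].
  intros p _. rewrite Nat.add_1_r. eapply Rle_trans; [apply Hshift |].
  apply Rmult_le_compat_l; [apply pow_le; lra |]. apply M_incr; lra.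
Qed.

End WeightMatrix.

Theorem proposition5p6 (M : R -> nat -> R) :
  weight_matrix M ->
  (forall lam, 0 < lam -> forall p : nat, (1 <= p)%nat ->
     M lam p ^ 2 <= M lam (p - 1)%nat * M lam (p + 1)%nat) ->
  (forall lam, 0 < lam ->
     is_lim_seq (fun p : nat => Rpower (M lam p) (/ INR p)) p_infty) ->
  (forall lam kap, 0 < lam -> lam <= kap -> forall p : nat, mu (M lam) p <= mu (M kap) p) ->
  ((forall j : nat, (1 <= j)%nat ->
      exists l : nat, (j < l)%nat /\
        ex_series (fun n : nat =>
          exp (omega (M (/ INR j)) (INR j * sqrt (INR (S n)))
               - omega (M (/ INR l)) (INR l * sqrt (INR (S n))))))
   <->
   (forall lam, 0 < lam ->
      exists kap A, 0 < kap /\ kap < lam /\ 1 <= A /\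
        forall p : nat, (1 <= p)%nat -> M kap (p + 1)%nat <= A ^ (p + 1) * M lam p)).
Proof.
  intros [M0 [Mpos M_incr]] M_lc M_root _.
  assert (M_weight : forall lam, 0 < lam -> weight_seq (M lam))
    by (intros lam Hlam; apply weight_seq_of_root_lim; auto).
  split.
  - apply derivation_closed_of_omega_sqrt_summable; assumption.
  - apply omega_sqrt_summable_of_derivation_closed; assumption.
Qed.
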